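(* Let $c:\mathbb{R}_+\to\mathbb{R}_+$ be twice continuously differentiable, strictly semi-convex and strictly increasing, but not of BPR-type. Then there is a nonatomic routing game with a single origin-destination pair, consisting of two parallel edges from the origin to the destination with cost functions $c(x)$ and $c(x)+t$ for some $t\in\mathbb{R}_+$, that does not have a demand-independent optimal toll (DIOT).
   Context: A function $c$ is of BPR-type if $c(x)=t_c+a_cx^{\beta}$ for all $x\ge0$, for some $t_c,a_c\in\mathbb{R}_+$ and $\beta>0$. Strictly semi-convex means that $x\mapsto x\,c(x)$ is strictly convex. In a nonatomic routing game with a single origin $o$, destination $d$ and demand $\mu\ge0$, a flow splits $\mu$ among the $o$–$d$ paths (here the two edges); an edge with load $x$ has cost $c_e(x)$. A Wardrop equilibrium is a flow where every used path has cost at most that of every other path; a system optimum minimizes the total cost $\sum_e x_ec_e(x_e)$. For a toll vector $\boldsymbol{\tau}\in\mathbb{R}^{\mathcal{E}}$ (entries may be negative), the tolled game has edge costs $c_e(x)+\tau_e$. $\boldsymbol{\tau}$ is a DIOT if for every demand $\mu\ge0$ every Wardrop equilibrium of the tolled game is a system optimum of the untolled game for that demand. *)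

From Stdlib Require Import Reals.
From Coquelicot Require Import Coquelicot.
Open Scope R_scope.

(* Power x^beta for x >= 0, beta > 0, with the convention 0^beta = 0
   (Stdlib's Rpower 0 beta = 1, so we patch the value at 0). *)
Definition rpow (x beta : R) : R :=
  if Rle_dec x 0 then 0 else Rpower x beta.

Definition has_deriv_Rplus (f f' : R -> R) : Prop :=
  forall x, 0 <= x ->
    filterlim (fun y => (f y - f x) / (y - x))
      (within (fun y => 0 <= y /\ y <> x) (locally x)) (locally (f' x)).

Definition continuous_Rplus (f : R -> R) : Prop :=
  forall x, 0 <= x -> filterlim f (within (fun y => 0 <= y) (locally x)) (locally (f x)).

Definition C2_Rplus (c : R -> R) : Prop :=
  exists c1 c2 : R -> R,
    has_deriv_Rplus c c1 /\ has_deriv_Rplus c1 c2 /\ continuous_Rplus c2.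

Definition maps_Rplus (c : R -> R) : Prop := forall x, 0 <= x -> 0 <= c x.

Definition strictly_increasing_Rplus (c : R -> R) : Prop :=
  forall x y, 0 <= x -> x < y -> c x < c y.

Definition strictly_convex_Rplus (f : R -> R) : Prop :=
  forall x y l, 0 <= x -> 0 <= y -> x <> y -> 0 < l < 1 ->
    f (l * x + (1 - l) * y) < l * f x + (1 - l) * f y.

Definition strictly_semiconvex (c : R -> R) : Prop :=
  strictly_convex_Rplus (fun x => x * c x).

Definition BPR_type (c : R -> R) : Prop :=
  exists tc ac beta, 0 <= tc /\ 0 <= ac /\ 0 < beta /\
    forall x, 0 <= x -> c x = tc + ac * rpow x beta.

(* Two-parallel-edge game, single o-d pair, edge costs c1, c2.
   A flow for demand mu is (x1, x2) with x1, x2 >= 0 and x1 + x2 = mu. *)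
Definition feasible (mu x1 x2 : R) : Prop := 0 <= x1 /\ 0 <= x2 /\ x1 + x2 = mu.

Definition wardrop (c1 c2 : R -> R) (mu x1 x2 : R) : Prop :=
  feasible mu x1 x2 /\
  (0 < x1 -> c1 x1 <= c2 x2) /\ (0 < x2 -> c2 x2 <= c1 x1).

Definition total_cost (c1 c2 : R -> R) (x1 x2 : R) : R := x1 * c1 x1 + x2 * c2 x2.

Definition system_optimum (c1 c2 : R -> R) (mu x1 x2 : R) : Prop :=
  feasible mu x1 x2 /\
  forall y1 y2, feasible mu y1 y2 -> total_cost c1 c2 x1 x2 <= total_cost c1 c2 y1 y2.

(* toll vector (tau1, tau2) in R^E (entries may be negative) is a DIOT *)
Definition DIOT (c1 c2 : R -> R) (tau1 tau2 : R) : Prop :=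
  forall mu, 0 <= mu -> forall x1 x2,
    wardrop (fun x => c1 x + tau1) (fun x => c2 x + tau2) mu x1 x2 ->
    system_optimum c1 c2 mu x1 x2.

(* Suppose every toll t >= 0 admitted a DIOT.  Write u(x) = c(x) - c(0) and
   g(x) = x c'(x), so that c + g is the marginal cost of an edge; at a system
   optimum the marginal costs of the used edges balance.  For a > 0 and
   t = mc(a) - mc(0), equilibria for demands near a force the toll gap
   tau2 + t - tau1 of a DIOT to be u(a).  Then every flow (x1, x2) with
   u(x1) = u(x2) + u(a) is an equilibrium, hence optimal, and balancing marginal
   costs gives g(x1) = g(x2) + g(a).  So g = G o u with G additive and
   nonnegative, hence linear: x c'(x) = k (c(x) - c(0)), whose solutions
   c(0) + (c(1) - c(0)) x^k are of BPR type. *)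

From Stdlib Require Import Reals Lra Psatz Classical.
From Coquelicot Require Import Coquelicot.
Open Scope R_scope.

Definition is_deriv_Rplus (f : R -> R) (x l : R) : Prop :=
  forall eta, 0 < eta -> exists delta, 0 < delta /\
    forall y, 0 <= y -> y <> x -> Rabs (y - x) < delta ->
      Rabs ((f y - f x) / (y - x) - l) < eta.

Lemma has_deriv_Rplus_is_deriv f f' x :
  has_deriv_Rplus f f' -> 0 <= x -> is_deriv_Rplus f x (f' x).
Proof.
  intros Hf Hx eta Heta.
  destruct (proj1 (filterlim_locally _ _) (Hf x Hx) (mkposreal eta Heta)) as [delta Hdelta].
  exists delta; split; [apply cond_pos|].
  intros y Hy Hyx Hyd. apply (Hdelta y Hyd). split; assumption.
Qed.

Lemma is_deriv_Rplus_continuous f x l : is_deriv_Rplus f x l ->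
  forall eta, 0 < eta -> exists delta, 0 < delta /\
    forall y, 0 <= y -> Rabs (y - x) < delta -> Rabs (f y - f x) < eta.
Proof.
  intros Hf eta Heta.
  destruct (Hf 1 Rlt_0_1) as [d1 [Hd1 Hslope]].
  assert (Hl : 0 < Rabs l + 1) by (pose proof (Rabs_pos l); lra).
  exists (Rmin d1 (eta / (Rabs l + 1))).
  split; [apply Rmin_pos; [lra | apply Rdiv_lt_0_compat; lra]|].
  intros y Hy Hyx.
  destruct (Req_dec y x) as [->|Hne].
  { unfold Rminus. rewrite Rplus_opp_r, Rabs_R0. exact Heta. }
  assert (Hyx1 := Rlt_le_trans _ _ _ Hyx (Rmin_l _ _)).
  assert (Hyx2 := Rlt_le_trans _ _ _ Hyx (Rmin_r _ _)).
  specialize (Hslope y Hy Hne Hyx1).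
  set (q := (f y - f x) / (y - x)) in Hslope.
  assert (Hq : Rabs q < Rabs l + 1) by (pose proof (Rabs_triang_inv q l); lra).
  replace (f y - f x) with (q * (y - x)) by (unfold q; field; lra).
  rewrite Rabs_mult.
  assert (Rabs (y - x) * (Rabs l + 1) < eta) by (apply Rlt_div_r; lra).
  pose proof (Rabs_pos q). pose proof (Rabs_pos (y - x)). nra.
Qed.

Lemma is_deriv_Rplus_mult_id f x l : is_deriv_Rplus f x l -> 0 <= x ->
  is_deriv_Rplus (fun y => y * f y) x (f x + x * l).
Proof.
  intros Hf Hx eta Heta.
  destruct (is_deriv_Rplus_continuous f x l Hf (eta / 2)) as [d1 [Hd1 Hcont]]; [lra|].
  destruct (Hf (eta / (2 * (x + 1)))) as [d2 [Hd2 Hslope]].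
  { apply Rdiv_lt_0_compat; lra. }
  exists (Rmin d1 d2). split; [apply Rmin_pos; assumption|].
  intros y Hy Hne Hyx.
  specialize (Hcont y Hy (Rlt_le_trans _ _ _ Hyx (Rmin_l _ _))).
  specialize (Hslope y Hy Hne (Rlt_le_trans _ _ _ Hyx (Rmin_r _ _))).
  replace ((y * f y - x * f x) / (y - x) - (f x + x * l))
    with ((f y - f x) + x * ((f y - f x) / (y - x) - l)) by (field; lra).
  eapply Rle_lt_trans; [apply Rabs_triang|].
  rewrite Rabs_mult, (Rabs_pos_eq x Hx).
  assert (Hsmall : x * (eta / (2 * (x + 1))) <= eta / 2).
  { replace (x * (eta / (2 * (x + 1)))) with (eta / 2 * (x / (x + 1))) by (field; lra).
    assert (x / (x + 1) <= 1) by (apply Rle_div_l; lra).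
    nra. }
  pose proof (Rabs_pos ((f y - f x) / (y - x) - l)). nra.
Qed.

Lemma is_deriv_Rplus_plus_linear f x l t : is_deriv_Rplus f x l ->
  is_deriv_Rplus (fun y => f y + t * y) x (l + t).
Proof.
  intros Hf eta Heta. destruct (Hf eta Heta) as [delta [Hdelta Hslope]].
  exists delta. split; [assumption|].
  intros y Hy Hne Hyx.
  replace ((f y + t * y - (f x + t * x)) / (y - x) - (l + t))
    with ((f y - f x) / (y - x) - l) by (field; lra).
  apply Hslope; assumption.
Qed.

Lemma is_deriv_Rplus_ge0 f x l : is_deriv_Rplus f x l -> 0 <= x ->
  (forall y, x < y -> f x < f y) -> 0 <= l.
Proof.
  intros Hf Hx Hinc. apply Rnot_lt_le. intros Hl.
  destruct (Hf (- l)) as [delta [Hdelta Hslope]]; [lra|].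
  set (y := x + delta / 2).
  assert (Hxy : x < y) by (unfold y; lra).
  assert (Hq : 0 < (f y - f x) / (y - x)).
  { specialize (Hinc y Hxy). apply Rdiv_lt_0_compat; lra. }
  assert (Habs : Rabs (y - x) < delta) by (unfold y; rewrite Rabs_pos_eq; lra).
  specialize (Hslope y ltac:(lra) ltac:(lra) Habs).
  rewrite Rabs_pos_eq in Hslope; lra.
Qed.

Lemma is_deriv_Rplus_derivable_pt_lim f x l : is_deriv_Rplus f x l -> 0 < x ->
  derivable_pt_lim f x l.
Proof.
  intros Hf Hx eps Heps. destruct (Hf eps Heps) as [delta [Hdelta Hslope]].
  exists (mkposreal (Rmin delta x) (Rmin_pos _ _ Hdelta Hx)). simpl.
  intros h Hh Hhd.
  assert (Hh1 : Rabs h < delta) by (eapply Rlt_le_trans; [exact Hhd | apply Rmin_l]).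
  assert (Hh2 : Rabs h < x) by (eapply Rlt_le_trans; [exact Hhd | apply Rmin_r]).
  specialize (Hslope (x + h)). replace (x + h - x) with h in Hslope by ring.
  apply Rabs_def2 in Hh2. apply Hslope; [lra | lra | assumption].
Qed.

Lemma strictly_increasing_Rplus_inj f x y : strictly_increasing_Rplus f ->
  0 <= x -> 0 <= y -> f x = f y -> x = y.
Proof.
  intros Hf Hx Hy Hxy.
  destruct (Rtotal_order x y) as [Hlt|[Heq|Hlt]]; [| exact Heq |].
  - pose proof (Hf x y Hx Hlt). lra.
  - pose proof (Hf y x Hy Hlt). lra.
Qed.

Section Rplus_continuity.

Variables f f' : R -> R.
Hypothesis f_deriv : forall x, 0 <= x -> is_deriv_Rplus f x (f' x).

Lemma continuity_Rmax0 : continuity (fun x => f (Rmax 0 x)).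
Proof.
  intros x. apply continuity_pt_filterlim, filterlim_locally. intros eps.
  assert (Hx : 0 <= Rmax 0 x) by apply Rmax_l.
  destruct (is_deriv_Rplus_continuous f _ _ (f_deriv _ Hx) eps (cond_pos eps))
    as [delta [Hdelta Hcont]].
  exists (mkposreal delta Hdelta). intros y Hy. change (Rabs (y - x) < delta) in Hy.
  apply Hcont; [apply Rmax_l|].
  eapply Rle_lt_trans; [|exact Hy].
  unfold Rmax. destruct (Rle_dec 0 y), (Rle_dec 0 x);
    unfold Rabs; repeat destruct (Rcase_abs _); lra.
Qed.

Lemma IVT_Rplus w v : 0 <= w -> f 0 <= v <= f w -> exists z, 0 <= z <= w /\ f z = v.
Proof.
  intros Hw Hv.
  destruct (IVT_gen _ 0 w v continuity_Rmax0) as [z [Hz Hfz]].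
  { rewrite (Rmax_left 0 0), (Rmax_right 0 w), Rmin_left, Rmax_right by lra. lra. }
  rewrite Rmin_left, Rmax_right in Hz by lra.
  exists z. rewrite Rmax_right in Hfz by lra. split; assumption.
Qed.

Lemma exists_balanced_split a d : 0 < a -> f 0 < f a + d -> d < f a - f 0 ->
  exists x, 0 < x < a /\ f x = f (a - x) + d.
Proof.
  intros Ha Hlow Hhigh.
  set (phi := fun x => f (Rmax 0 x) - f (Rmax 0 (a - x)) - d).
  assert (Hphi : continuity phi).
  { intros x. unfold phi.
    apply continuity_pt_minus; [apply continuity_pt_minus|apply continuity_pt_const; now intros ? ?].
    - apply continuity_Rmax0.
    - apply (continuity_pt_comp (fun x => a - x) (fun x => f (Rmax 0 x)));
        [reg | apply continuity_Rmax0]. }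
  destruct (IVT_gen phi 0 a 0 Hphi) as [x [Hx Hphix]].
  { assert (phi 0 = f 0 - f a - d) as ->.
    { unfold phi. rewrite Rminus_0_r, (Rmax_left 0 0), (Rmax_right 0 a) by lra. reflexivity. }
    assert (phi a = f a - f 0 - d) as ->.
    { unfold phi. rewrite Rminus_diag, (Rmax_left 0 0), (Rmax_right 0 a) by lra. reflexivity. }
    rewrite Rmin_left, Rmax_right by lra. lra. }
  rewrite Rmin_left, Rmax_right in Hx by lra.
  unfold phi in Hphix. rewrite (Rmax_right 0 x), (Rmax_right 0 (a - x)) in Hphix by lra.
  exists x. split; [|lra].
  split; apply Rnot_le_lt; intros Hend.
  - replace x with 0 in Hphix by lra. rewrite Rminus_0_r in Hphix. lra.
  - replace x with a in Hphix by lra. rewrite Rminus_diag in Hphix. lra.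
Qed.

End Rplus_continuity.

Lemma strictly_convex_chord_slopes h : strictly_convex_Rplus h ->
  forall x w z, 0 <= x -> x < w -> w < z ->
  (h w - h x) / (w - x) < (h z - h x) / (z - x) < (h z - h w) / (z - w).
Proof.
  intros Hh x w z Hx Hxw Hwz.
  set (s := (h z - h x) / (z - x)).
  assert (Hs : h z = h x + s * (z - x)) by (unfold s; field; lra).
  assert (Hhw : h w < h x + s * (w - x)).
  { set (l := (z - w) / (z - x)).
    assert (Hl : 0 < l < 1).
    { unfold l. split; [apply Rdiv_lt_0_compat | apply Rlt_div_l]; lra. }
    pose proof (Hh x z l Hx ltac:(lra) ltac:(lra) Hl) as Hconv.
    replace (l * x + (1 - l) * z) with w in Hconv by (unfold l; field; lra).
    replace (h x + s * (w - x)) with (l * h x + (1 - l) * h z)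
      by (rewrite Hs; unfold l; field; lra).
    exact Hconv. }
  split.
  - apply (Rlt_div_l (h w - h x) s (w - x)); lra.
  - apply (Rlt_div_r s (h z - h w) (z - w)); nra.
Qed.

Lemma is_deriv_Rplus_le_chord h x z l : 0 <= x -> x < z -> is_deriv_Rplus h x l ->
  (forall w, x < w < z -> (h w - h x) / (w - x) < (h z - h x) / (z - x)) ->
  l <= (h z - h x) / (z - x).
Proof.
  intros Hx Hxz Hh Hchord. apply Rnot_lt_le. intros Hlt.
  destruct (Hh (l - (h z - h x) / (z - x))) as [delta [Hdelta Hslope]]; [lra|].
  set (w := x + Rmin delta (z - x) / 2).
  assert (Hmin : 0 < Rmin delta (z - x)) by (apply Rmin_pos; lra).
  pose proof (Rmin_l delta (z - x)). pose proof (Rmin_r delta (z - x)).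
  assert (Hw : x < w < z) by (unfold w; lra).
  assert (Habs : Rabs (w - x) < delta) by (rewrite Rabs_pos_eq; unfold w; lra).
  specialize (Hslope w ltac:(lra) ltac:(lra) Habs). apply Rabs_def2 in Hslope.
  specialize (Hchord w Hw). lra.
Qed.

Lemma is_deriv_Rplus_ge_chord h x z l : 0 <= x -> x < z -> is_deriv_Rplus h z l ->
  (forall w, x < w < z -> (h z - h x) / (z - x) < (h z - h w) / (z - w)) ->
  (h z - h x) / (z - x) <= l.
Proof.
  intros Hx Hxz Hh Hchord. apply Rnot_lt_le. intros Hlt.
  destruct (Hh ((h z - h x) / (z - x) - l)) as [delta [Hdelta Hslope]]; [lra|].
  set (w := z - Rmin delta (z - x) / 2).
  assert (Hmin : 0 < Rmin delta (z - x)) by (apply Rmin_pos; lra).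
  pose proof (Rmin_l delta (z - x)). pose proof (Rmin_r delta (z - x)).
  assert (Hw : x < w < z) by (unfold w; lra).
  assert (Habs : Rabs (w - z) < delta) by (rewrite Rabs_left; unfold w; lra).
  specialize (Hslope w ltac:(lra) ltac:(lra) Habs). apply Rabs_def2 in Hslope.
  replace ((h w - h z) / (w - z)) with ((h z - h w) / (z - w)) in Hslope by (field; lra).
  specialize (Hchord w Hw). lra.
Qed.

Lemma strictly_convex_deriv_increasing h h' : strictly_convex_Rplus h ->
  (forall x, 0 <= x -> is_deriv_Rplus h x (h' x)) ->
  forall x y, 0 <= x -> x < y -> h' x < h' y.
Proof.
  intros Hh Hd x y Hx Hxy.
  set (z := (x + y) / 2).
  assert (Hxz : x < z) by (unfold z; lra). assert (Hzy : z < y) by (unfold z; lra).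
  assert (Hleft : h' x <= (h z - h x) / (z - x)).
  { apply is_deriv_Rplus_le_chord; auto.
    intros w Hw. apply (strictly_convex_chord_slopes h Hh); lra. }
  assert (Hright : (h y - h z) / (y - z) <= h' y).
  { apply is_deriv_Rplus_ge_chord; [lra | lra | apply Hd; lra |].
    intros w Hw. apply (strictly_convex_chord_slopes h Hh); lra. }
  pose proof (strictly_convex_chord_slopes h Hh x z y Hx Hxz Hzy). lra.
Qed.

Lemma transfer_deriv_le H1 H2 l1 l2 x1 x2 : 0 < x1 -> 0 <= x2 ->
  is_deriv_Rplus H1 x1 l1 -> is_deriv_Rplus H2 x2 l2 ->
  (forall e, 0 < e <= x1 -> H1 x1 + H2 x2 <= H1 (x1 - e) + H2 (x2 + e)) -> l1 <= l2.
Proof.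
  intros Hx1 Hx2 Hd1 Hd2 Hopt. apply Rnot_lt_le. intros Hlt.
  set (eta := (l1 - l2) / 2).
  destruct (Hd1 eta ltac:(unfold eta; lra)) as [d1 [Hd1pos Hslope1]].
  destruct (Hd2 eta ltac:(unfold eta; lra)) as [d2 [Hd2pos Hslope2]].
  set (e := Rmin x1 (Rmin d1 d2) / 2).
  pose proof (Rmin_pos x1 _ Hx1 (Rmin_pos d1 d2 Hd1pos Hd2pos)).
  pose proof (Rmin_l x1 (Rmin d1 d2)). pose proof (Rmin_r x1 (Rmin d1 d2)).
  pose proof (Rmin_l d1 d2). pose proof (Rmin_r d1 d2).
  assert (He : 0 < e <= x1) by (unfold e; lra).
  specialize (Hslope1 (x1 - e) ltac:(lra) ltac:(lra)).
  specialize (Hslope2 (x2 + e) ltac:(lra) ltac:(lra)).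
  replace (x1 - e - x1) with (- e) in Hslope1 by ring.
  replace (x2 + e - x2) with e in Hslope2 by ring.
  rewrite Rabs_Ropp, Rabs_pos_eq in Hslope1 by lra.
  rewrite Rabs_pos_eq in Hslope2 by lra.
  specialize (Hslope1 ltac:(unfold e; lra)). specialize (Hslope2 ltac:(unfold e; lra)).
  apply Rabs_def2 in Hslope1. apply Rabs_def2 in Hslope2.
  replace ((H1 (x1 - e) - H1 x1) / - e) with ((H1 x1 - H1 (x1 - e)) / e)
    in Hslope1 by (field; lra).
  assert ((H1 x1 - H1 (x1 - e)) / e <= (H2 (x2 + e) - H2 x2) / e).
  { apply Rmult_le_compat_r; [left; apply Rinv_0_lt_compat|specialize (Hopt e He)]; lra. }
  unfold eta in *. lra.
Qed.

Lemma le_of_forall_sub_div_INR_le A B C : 0 <= C ->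
  (forall n : nat, (0 < n)%nat -> B - C / INR n <= A) -> B <= A.
Proof.
  intros HC H. apply Rnot_lt_le. intros Hlt.
  destruct (archimed_cor1 ((B - A) / (C + 1))) as [N [HN HN0]].
  { apply Rdiv_lt_0_compat; lra. }
  specialize (H N HN0).
  assert (Hinv : 0 < / INR N) by (apply Rinv_0_lt_compat, lt_0_INR; exact HN0).
  assert (C / INR N <= (C + 1) * / INR N) by (unfold Rdiv; nra).
  assert ((C + 1) * / INR N < B - A).
  { replace (B - A) with ((C + 1) * ((B - A) / (C + 1))) by (field; lra).
    apply Rmult_lt_compat_l; lra. }
  lra.
Qed.

Section Additive_proportional.

Variables u g : R -> R.
Hypothesis u_zero : u 0 = 0.
Hypothesis u_increasing : strictly_increasing_Rplus u.
Hypothesis u_IVT : forall w v, 0 <= w -> 0 <= v <= u w -> exists z, 0 <= z <= w /\ u z = v.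
Hypothesis g_ge0 : forall x, 0 <= x -> 0 <= g x.
Hypothesis g_additive : forall a x1 x2, 0 <= a -> 0 <= x1 -> 0 <= x2 ->
  u x1 = u x2 + u a -> g x1 = g x2 + g a.

Let u_pos x : 0 < x -> 0 < u x.
Proof. intros Hx. rewrite <- u_zero. apply u_increasing; lra. Qed.

Let u_ge0 x : 0 <= x -> 0 <= u x.
Proof. intros [Hx|<-]; [apply Rlt_le, u_pos, Hx | rewrite u_zero; lra]. Qed.

Let g_zero : g 0 = 0.
Proof.
  pose proof (g_additive 0 0 0 (Rle_refl 0) (Rle_refl 0) (Rle_refl 0)) as H.
  rewrite u_zero, Rplus_0_r in H. specialize (H eq_refl). lra.
Qed.

Lemma additive_nat_mul (j : nat) y w : 0 <= y -> 0 <= w -> INR j * u y <= u w ->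
  exists z, 0 <= z <= w /\ u z = INR j * u y /\ g z = INR j * g y.
Proof.
  revert y w. induction j as [|j IH]; intros y w Hy Hw Hj.
  - exists 0. simpl. rewrite u_zero, g_zero. split; [lra | split; ring].
  - rewrite S_INR in *. pose proof (u_ge0 y Hy).
    destruct (IH y w Hy Hw ltac:(nra)) as [z [Hz [Huz Hgz]]].
    destruct (u_IVT w ((INR j + 1) * u y) Hw) as [z' [Hz' Huz']].
    { pose proof (pos_INR j). split; nra. }
    exists z'. split; [exact Hz' | split; [exact Huz'|]].
    rewrite (g_additive y z' z) by (auto; lra). rewrite Hgz. ring.
Qed.

Lemma additive_nat_div x (n : nat) : 0 <= x -> (0 < n)%nat ->
  exists y, 0 <= y /\ u y = u x / INR n /\ g x = INR n * g y.
Proof.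
  intros Hx Hn. assert (Hn1 : 1 <= INR n) by (apply (le_INR 1); exact Hn).
  pose proof (u_ge0 x Hx).
  destruct (u_IVT x (u x / INR n) Hx) as [y [Hy Huy]].
  { split; [apply Rdiv_le_0_compat; lra | apply Rle_div_l; nra]. }
  exists y. split; [lra | split; [exact Huy|]].
  destruct (additive_nat_mul n y x ltac:(lra) Hx) as [z [Hz [Huz Hgz]]].
  { rewrite Huy. right. field. lra. }
  replace x with z; [exact Hgz|].
  apply (strictly_increasing_Rplus_inj u); [exact u_increasing | lra | lra |]. rewrite Huz, Huy. field. lra.
Qed.

Lemma additive_lower_bound x w (n : nat) : 0 < x -> 0 <= w -> (0 < n)%nat ->
  u w / u x * g x - g x / INR n <= g w.
Proof.
  intros Hx Hw Hn. assert (Hnpos : 0 < INR n) by (apply lt_0_INR; exact Hn).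
  pose proof (u_pos x Hx). pose proof (u_ge0 w Hw). pose proof (g_ge0 x ltac:(lra)).
  destruct (additive_nat_div x n ltac:(lra) Hn) as [y [Hy [Huy Hgy]]].
  (* [w] is at least [j] copies of [y], where [j = floor (n u(w) / u(x))] *)
  destruct (nfloor_ex (INR n * u w / u x)) as [j [Hj1 Hj2]].
  { apply Rdiv_le_0_compat; nra. }
  assert (Hjy : INR j * u y <= u w).
  { rewrite Huy. apply Rle_div_r in Hj1; [|lra].
    replace (INR j * (u x / INR n)) with (INR j * u x / INR n) by (field; lra).
    apply Rle_div_l; nra. }
  destruct (additive_nat_mul j y w Hy Hw Hjy) as [z [Hz [Huz Hgz]]].
  destruct (u_IVT w (u w - u z) Hw) as [r [Hr Hur]].
  { pose proof (u_ge0 z ltac:(lra)). lra. }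
  rewrite (g_additive r w z) by lra.
  pose proof (g_ge0 r ltac:(lra)).
  assert (Hjn : u w / u x - / INR n <= INR j / INR n).
  { apply Rle_div_r; [exact Hnpos|].
    replace ((u w / u x - / INR n) * INR n) with (INR n * u w / u x - 1) by (field; lra).
    lra. }
  replace (g z) with (INR j / INR n * g x) by (rewrite Hgz, Hgy; field; lra).
  replace (u w / u x * g x - g x / INR n) with ((u w / u x - / INR n) * g x) by (field; lra).
  nra.
Qed.

Lemma additive_proportional x w : 0 < x -> 0 < w -> g w * u x = g x * u w.
Proof.
  intros Hx Hw. pose proof (u_pos x Hx). pose proof (u_pos w Hw).
  assert (Hxw : g x * u w / u x <= g w).
  { replace (g x * u w / u x) with (u w / u x * g x) by (field; lra).
    apply (le_of_forall_sub_div_INR_le _ _ (g x)); [apply g_ge0; lra|].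
    intros n Hn. apply additive_lower_bound; lra || assumption. }
  assert (Hwx : g w * u x / u w <= g x).
  { replace (g w * u x / u w) with (u x / u w * g w) by (field; lra).
    apply (le_of_forall_sub_div_INR_le _ _ (g w)); [apply g_ge0; lra|].
    intros n Hn. apply additive_lower_bound; lra || assumption. }
  apply Rle_div_l in Hxw; [|lra]. apply Rle_div_l in Hwx; [|lra].
  lra.
Qed.

End Additive_proportional.

Lemma euler_ode_power u u' k :
  (forall x, 0 < x -> derivable_pt_lim u x (u' x)) ->
  (forall x, 0 < x -> x * u' x = k * u x) ->
  forall x, 0 < x -> u x = u 1 * Rpower x k.
Proof.
  intros Hu Hode.
  (* [u(y) y^(-k)] has derivative [y^(-k-1) (y u'(y) - k u(y)) = 0] *)
  set (F := fun y => u y * Rpower y (- k)).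
  assert (HF : forall y, 0 < y -> derivable_pt_lim F y 0).
  { intros y Hy.
    assert (HD := derivable_pt_lim_mult _ _ _ _ _ (Hu y Hy) (derivable_pt_lim_power y (- k) Hy)).
    replace 0 with (u' y * Rpower y (- k) + u y * (- k * Rpower y (- k - 1))); [exact HD|].
    replace (Rpower y (- k)) with (Rpower y (- k - 1) * y)
      by (rewrite <- (Rpower_1 y) at 2 by exact Hy; rewrite <- Rpower_plus; f_equal; ring).
    replace (u' y * (Rpower y (- k - 1) * y) + u y * (- k * Rpower y (- k - 1)))
      with (Rpower y (- k - 1) * (y * u' y - k * u y)) by ring.
    rewrite Hode by exact Hy. ring. }
  assert (HF1 : forall x, 0 < x -> F x = F 1).
  { intros x Hx. destruct (Rtotal_order x 1) as [H|[->|H]]; [| reflexivity |].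
    - destruct (MVT_cor2 F (fun _ => 0) x 1 H) as [z [Hz _]];
        [intros z Hz; apply HF; lra | lra].
    - destruct (MVT_cor2 F (fun _ => 0) 1 x H) as [z [Hz _]];
        [intros z Hz; apply HF; lra | lra]. }
  intros x Hx. specialize (HF1 x Hx). unfold F in HF1.
  replace (Rpower 1 (- k)) with 1 in HF1 by (unfold Rpower; rewrite ln_1, Rmult_0_r, exp_0; reflexivity).
  rewrite Rmult_1_r in HF1. rewrite <- HF1, Rmult_assoc, <- Rpower_plus.
  replace (- k + k) with 0 by ring. rewrite Rpower_O by exact Hx. ring.
Qed.

Section Two_edge_game.

Variables c c' : R -> R.
Hypothesis c_deriv : forall x, 0 <= x -> is_deriv_Rplus c x (c' x).
Hypothesis c_semiconvex : strictly_semiconvex c.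
Hypothesis c_increasing : strictly_increasing_Rplus c.

Definition marginal_cost (x : R) : R := c x + x * c' x.

Lemma marginal_cost_increasing x y : 0 <= x -> x < y -> marginal_cost x < marginal_cost y.
Proof.
  apply (strictly_convex_deriv_increasing (fun y => y * c y)); [exact c_semiconvex|].
  intros z Hz. apply is_deriv_Rplus_mult_id; auto.
Qed.

Lemma system_optimum_marginal_costs t mu x1 x2 :
  system_optimum c (fun x => c x + t) mu x1 x2 ->
  (0 < x1 -> marginal_cost x1 <= marginal_cost x2 + t) /\
  (0 < x2 -> marginal_cost x2 + t <= marginal_cost x1).
Proof.
  intros [[Hx1 [Hx2 Hmu]] Hopt].
  assert (Hd1 := is_deriv_Rplus_mult_id c x1 _ (c_deriv x1 Hx1) Hx1).
  assert (Hd2 := is_deriv_Rplus_plus_linear _ _ _ t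
                   (is_deriv_Rplus_mult_id c x2 _ (c_deriv x2 Hx2) Hx2)).
  split; intros Hpos.
  - apply (transfer_deriv_le _ _ _ _ x1 x2 Hpos Hx2 Hd1 Hd2).
    intros e He. specialize (Hopt (x1 - e) (x2 + e)).
    unfold feasible, total_cost in Hopt. lra.
  - apply (transfer_deriv_le _ _ _ _ x2 x1 Hpos Hx1 Hd2 Hd1).
    intros e He. specialize (Hopt (x1 + e) (x2 - e)).
    unfold feasible, total_cost in Hopt. lra.
Qed.

(* The hypotheses are the Wardrop conditions of the tolled game, with the tolls
   collected on edge 2. *)
Lemma DIOT_marginal_costs t tau1 tau2 x1 x2 :
  DIOT c (fun x => c x + t) tau1 tau2 -> 0 <= x1 -> 0 <= x2 ->
  (0 < x1 -> c x1 <= c x2 + (tau2 + t - tau1)) ->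
  (0 < x2 -> c x2 + (tau2 + t - tau1) <= c x1) ->
  (0 < x1 -> marginal_cost x1 <= marginal_cost x2 + t) /\
  (0 < x2 -> marginal_cost x2 + t <= marginal_cost x1).
Proof.
  intros HD Hx1 Hx2 Hw1 Hw2.
  apply (system_optimum_marginal_costs t (x1 + x2)).
  apply HD; [lra|].
  split; [split; [|split]; lra|].
  split; intros Hpos; [specialize (Hw1 Hpos) | specialize (Hw2 Hpos)]; lra.
Qed.

Lemma DIOT_toll_gap a tau1 tau2 : 0 < a ->
  DIOT c (fun x => c x + (marginal_cost a - marginal_cost 0)) tau1 tau2 ->
  tau2 + (marginal_cost a - marginal_cost 0) - tau1 = c a - c 0.
Proof.
  intros Ha HD.
  set (t := marginal_cost a - marginal_cost 0) in *.
  remember (tau2 + t - tau1) as d eqn:Hd.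
  assert (Hmc := marginal_cost_increasing).
  assert (Hmc0a := Hmc 0 a ltac:(lra) Ha).
  destruct (Rtotal_order d (c a - c 0)) as [Hlt|[Heq|Hgt]]; [exfalso | exact Heq | exfalso].
  - destruct (Rle_or_lt (c a + d) (c 0)) as [Hle|Hgt0].
    + (* all of the demand [a] on the tolled edge 2 is an equilibrium *)
      destruct (DIOT_marginal_costs t tau1 tau2 0 a HD) as [_ Hopt]; try (intros; lra).
      specialize (Hopt Ha). unfold t in Hopt. lra.
    + destruct (exists_balanced_split c c' c_deriv a d Ha Hgt0 Hlt) as [x [Hx Hbal]].
      destruct (DIOT_marginal_costs t tau1 tau2 x (a - x) HD) as [Hopt1 Hopt2]; try (intros; lra).
      specialize (Hopt1 ltac:(lra)). specialize (Hopt2 ltac:(lra)).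
      pose proof (Hmc 0 (a - x) ltac:(lra) ltac:(lra)). pose proof (Hmc x a ltac:(lra) ltac:(lra)).
      unfold t in *. lra.
  - (* slightly more than [a] on the untolled edge 1 is an equilibrium *)
    destruct (is_deriv_Rplus_continuous c a _ (c_deriv a ltac:(lra)) (d - (c a - c 0)))
      as [delta [Hdelta Hcont]]; [lra|].
    set (x := a + delta / 2).
    assert (Hax : a < x < a + delta) by (unfold x; lra).
    specialize (Hcont x ltac:(lra)).
    rewrite Rabs_pos_eq in Hcont by lra.
    specialize (Hcont ltac:(lra)). apply Rabs_def2 in Hcont.
    destruct (DIOT_marginal_costs t tau1 tau2 x 0 HD) as [Hopt _]; try (intros; lra).
    specialize (Hopt ltac:(lra)).
    pose proof (Hmc a x ltac:(lra) ltac:(lra)). unfold t in *. lra.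
Qed.

Hypothesis all_tolls_DIOT :
  forall t, 0 <= t -> exists tau1 tau2, DIOT c (fun x => c x + t) tau1 tau2.

Lemma DIOT_excess_additive a x1 x2 : 0 <= a -> 0 <= x1 -> 0 <= x2 ->
  c x1 - c 0 = (c x2 - c 0) + (c a - c 0) -> x1 * c' x1 = x2 * c' x2 + a * c' a.
Proof.
  intros Ha Hx1 Hx2 Hsum.
  destruct (Req_dec a 0) as [->|Ha0].
  { assert (x1 = x2) as -> by (apply (strictly_increasing_Rplus_inj c); auto; lra). ring. }
  destruct (Req_dec x2 0) as [->|Hx20].
  { assert (x1 = a) as -> by (apply (strictly_increasing_Rplus_inj c); auto; lra). ring. }
  pose proof (marginal_cost_increasing 0 a ltac:(lra) ltac:(lra)).
  destruct (all_tolls_DIOT (marginal_cost a - marginal_cost 0) ltac:(lra)) as [tau1 [tau2 HD]].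
  pose proof (DIOT_toll_gap a tau1 tau2 ltac:(lra) HD) as Hgap.
  pose proof (c_increasing 0 x2 ltac:(lra) ltac:(lra)).
  pose proof (c_increasing 0 a ltac:(lra) ltac:(lra)).
  assert (Hx1pos : 0 < x1).
  { destruct Hx1 as [|<-]; [assumption | lra]. }
  (* the toll gap makes [(x1, x2)] an equilibrium with both edges used *)
  destruct (DIOT_marginal_costs _ tau1 tau2 x1 x2 HD Hx1 Hx2) as [Hopt1 Hopt2]; try lra.
  specialize (Hopt1 Hx1pos). specialize (Hopt2 ltac:(lra)).
  unfold marginal_cost in *. lra.
Qed.

Let k := c' 1 / (c 1 - c 0).

Lemma DIOT_euler_relation x : 0 < x -> x * c' x = k * (c x - c 0).
Proof.
  intros Hx. pose proof (c_increasing 0 1 ltac:(lra) ltac:(lra)).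
  assert (Heq : x * c' x * (c 1 - c 0) = 1 * c' 1 * (c x - c 0)).
  { apply (additive_proportional (fun y => c y - c 0) (fun y => y * c' y)); try lra.
    - intros y z Hy Hyz. pose proof (c_increasing y z Hy Hyz). lra.
    - intros w v Hw Hv.
      destruct (IVT_Rplus c c' c_deriv w (c 0 + v) Hw ltac:(lra)) as [z [Hz Hcz]].
      exists z. split; [exact Hz | lra].
    - intros y Hy. apply Rmult_le_pos; [exact Hy|].
      apply (is_deriv_Rplus_ge0 c y); [apply c_deriv | | intros; apply c_increasing]; assumption.
    - intros a x1 x2 Ha Hx1 Hx2 Hsum.
      apply DIOT_excess_additive; auto; lra. }
  unfold k. apply (Rmult_eq_reg_r (c 1 - c 0)); [|lra].
  rewrite Heq. field. lra.
Qed.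

Lemma DIOT_BPR_type : maps_Rplus c -> BPR_type c.
Proof.
  intros Hmap.
  assert (Hpow : forall x, 0 < x -> c x - c 0 = (c 1 - c 0) * Rpower x k).
  { apply (euler_ode_power (fun y => c y - c 0) c' k); [|exact DIOT_euler_relation].
    intros x Hx. replace (c' x) with (c' x - 0) by ring.
    apply (derivable_pt_lim_minus c (fun _ => c 0));
      [apply is_deriv_Rplus_derivable_pt_lim; [apply c_deriv; lra | exact Hx]
      | apply derivable_pt_lim_const]. }
  pose proof (c_increasing 0 1 ltac:(lra) ltac:(lra)).
  assert (Hk : 0 < k).
  { assert (Hk0 : 0 <= k).
    { apply Rdiv_le_0_compat; [|lra].
      apply (is_deriv_Rplus_ge0 c 1); [apply c_deriv; lra | lra | intros; apply c_increasing; lra]. }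
    destruct Hk0 as [|Hk0]; [assumption|].
    (* with [k = 0] the power law would make [c] constant on (0, +oo) *)
    pose proof (Hpow (1 / 2) ltac:(lra)) as Hhalf.
    pose proof (c_increasing (1 / 2) 1 ltac:(lra) ltac:(lra)).
    rewrite <- Hk0, Rpower_O in Hhalf by lra. lra. }
  exists (c 0), (c 1 - c 0), k.
  split; [apply Hmap; lra | split; [lra | split; [exact Hk|]]].
  intros x Hx. unfold rpow. destruct (Rle_dec x 0).
  - replace x with 0 by lra. ring.
  - rewrite <- Hpow by lra. ring.
Qed.

End Two_edge_game.

Theorem theorem5 (c : R -> R) :
  maps_Rplus c -> C2_Rplus c -> strictly_semiconvex c ->
  strictly_increasing_Rplus c -> ~ BPR_type c ->
  exists t : R, 0 <= t /\
    ~ (exists tau1 tau2 : R, DIOT c (fun x => c x + t) tau1 tau2).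
Proof.
  intros Hmap [c' [c'' [Hc' _]]] Hsemiconvex Hincreasing HnotBPR.
  apply NNPP. intros Hno. apply HnotBPR.
  apply (DIOT_BPR_type c c'); try assumption.
  - intros x Hx. apply has_deriv_Rplus_is_deriv; assumption.
  - intros t Ht. apply NNPP. intros Hnt. apply Hno. exists t. split; assumption.
Qed.
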